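(* Let $A$ be a finite ring with unity (not necessarily associative or commutative), let $E$ be a set, and consider the ring $A^E$ with pointwise operations. For $X\subseteq A^E$ set $\mathcal{R}(X)=X\cup\{-1,0,1\}\cup\{x+y : x,y\in X\}\cup\{xy : x,y\in X\}$. Let $(\mathscr{X}_i)_{i\in\mathbf{N}}$ be an increasing sequence of subsets of $A^E$ such that $\mathcal{R}(\mathscr{X}_i)\subseteq\mathscr{X}_{i+1}$ for all $i$ and $\bigcup_{i\in\mathbf{N}}\mathscr{X}_i=A^E$. Then $A^E=\mathscr{X}_i$ for some $i$. *)

From mathcomp Require Import all_boot.
Set Implicit Arguments. Unset Strict Implicit. Unset Printing Implicit Defensive.

Record naRing (A : Type) := NARing {
  na_add : A -> A -> A;
  na_zero : A;
  na_opp : A -> A;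
  na_mul : A -> A -> A;
  na_one : A;
  na_addA : associative na_add;
  na_addC : commutative na_add;
  na_add0r : left_id na_zero na_add;
  na_addNr : forall x, na_add (na_opp x) x = na_zero;
  na_mulDl : left_distributive na_mul na_add;
  na_mulDr : right_distributive na_mul na_add;
  na_mul1r : left_id na_one na_mul;
  na_mulr1 : right_id na_one na_mul
}.

Definition pw_add A (R : naRing A) E (x y : E -> A) : E -> A :=
  fun e => na_add R (x e) (y e).
Definition pw_mul A (R : naRing A) E (x y : E -> A) : E -> A :=
  fun e => na_mul R (x e) (y e).
Definition pw_const A E (a : A) : E -> A := fun _ => a.

Definition Rclos A (R : naRing A) E (X : (E -> A) -> Prop) : (E -> A) -> Prop :=
  fun f =>
    X f
    \/ f = @pw_const A E (na_opp R (na_one R))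
    \/ f = @pw_const A E (na_zero R)
    \/ f = @pw_const A E (na_one R)
    \/ (exists x y, X x /\ X y /\ f = pw_add R x y)
    \/ (exists x y, X x /\ X y /\ f = pw_mul R x y).

From mathcomp Require Import all_boot.
From mathcomp Require Import boolp zify.

Set Implicit Arguments. Unset Strict Implicit. Unset Printing Implicit Defensive.

(* Call Z ⊆ E bounded if all functions supported in Z lie in one X_i; assume E is not.
   As A is finite, for any f supported on an unbounded Z some fibre Z ∩ f⁻¹(a) is still
   unbounded, while on the rest D of Z the function f - a escapes any prescribed X_k
   (since f - a·1_Z does).  Iterating yields disjoint pieces D_s, indexed by finite binary
   strings s, carrying h_s ∉ X_(|s|+1); glue them into one G ∈ X_m.  For x ∈ 2^ℕ let B_x
   be the union of the D_s over prefixes s of x and C_x that over strings branching off x.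
   The indicators of these sets exhaust the X_n, and a diagonal argument gives n ≥ m and
   x, z with both 1_(B_z), 1_(C_x) ∈ X_n that first differ at n.  Then B_z ∩ C_x = D_t for
   the string t of length n + 1 along z, so h_t = (G·1_(B_z))·1_(C_x) ∈ X_(n+2), absurd. *)

Lemma incr_leq (T : Type) (P : nat -> T -> Prop) :
  (forall n x, P n x -> P n.+1 x) -> forall m n x, m <= n -> P m x -> P n x.
Proof.
move=> Pincr m n x /subnKC <-; elim: (n - m) => [|d IHd] Pm; first by rewrite addn0.
by rewrite addnS; apply/Pincr/IHd.
Qed.

Lemma glue_disjoint (I T B : Type) (b0 : B) (D : I -> T -> Prop) (h : I -> T -> B) :
  (forall i j t, D i t -> D j t -> i = j) ->
  exists G : T -> B, forall i t, D i t -> G t = h i t.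
Proof.
move=> Ddisj.
have /choice [G HG] : forall t, exists b : B, forall i, D i t -> b = h i t.
  move=> t; have [[i Dit]|noD] := pselect (exists i, D i t).
    by exists (h i t) => j Djt; rewrite (Ddisj _ _ _ Djt Dit).
  by exists b0 => i Dit; case: noD; exists i.
by exists G => i t; apply: HG.
Qed.

Section NARing.
Variables (A : Type) (R : naRing A).

Lemma na_addr0 x : na_add R x (na_zero R) = x.
Proof. by rewrite na_addC na_add0r. Qed.

Lemma na_addrN x : na_add R x (na_opp R x) = na_zero R.
Proof. by rewrite na_addC na_addNr. Qed.

Lemma na_addrI x : injective (na_add R x).
Proof.
by move=> y z Exyz; rewrite -[y](na_add0r R) -(na_addNr R x) -na_addA Exyz na_addA
  na_addNr na_add0r.
Qed.

Lemma na_mulr0 x : na_mul R x (na_zero R) = na_zero R.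
Proof.
by apply: (@na_addrI (na_mul R x (na_zero R))); rewrite -na_mulDr !na_addr0.
Qed.

Lemma na_mul0r x : na_mul R (na_zero R) x = na_zero R.
Proof.
by apply: (@na_addrI (na_mul R (na_zero R) x)); rewrite -na_mulDl !na_addr0.
Qed.

Variable E : Type.

Definition supported (f : E -> A) (Z : E -> Prop) := forall e, ~ Z e -> f e = na_zero R.

Definition indicator (Z : E -> Prop) : E -> A :=
  fun e => if `[< Z e >] then na_one R else na_zero R.

Lemma mul_indicators_restrict (B C D : E -> Prop) (G h : E -> A) :
  (forall e, B e /\ C e <-> D e) -> supported h D -> (forall e, D e -> G e = h e) ->
  h = pw_mul R (pw_mul R G (indicator B)) (indicator C).
Proof.
move=> BCD hD GD; apply: funext => e; rewrite /pw_mul /indicator.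
have [De|nDe] := pselect (D e).
  have [Be Ce] := (BCD e).2 De.
  by rewrite (asboolT Be) (asboolT Ce) !na_mulr1 GD.
rewrite hD //; case: (asboolP (C e)) => Ce; last by rewrite na_mulr0.
case: (asboolP (B e)) => Be; last by rewrite na_mulr0 na_mul0r.
by case: nDe; apply/BCD.
Qed.

End NARing.

Fixpoint rprefix (x : nat -> bool) n : seq bool :=
  if n is k.+1 then x k :: rprefix x k else [::].

Lemma size_rprefix x n : size (rprefix x n) = n.
Proof. by elim: n => //= n ->. Qed.

Lemma rprefix_inj x z n : rprefix x n = rprefix z n -> forall i, i < n -> x i = z i.
Proof.
elim: n => [|n IHn] //= [xzn /IHn xz] i; rewrite ltnS leq_eqVlt.
by case/orP=> [/eqP -> //|]; apply: xz.
Qed.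

Lemma rprefix_eq_branch x z n k k' :
  rprefix x n = rprefix z n -> z n = ~~ x n ->
  rprefix z k = ~~ x k' :: rprefix x k' -> k' = n.
Proof.
move=> xzn zxn; case: k => [|k] //= [zxk' zxk].
have kk' : k = k' by have := congr1 size zxk; rewrite !size_rprefix.
subst k'; case: (ltngtP k n) => // [kn|nk].
  by move: zxk'; rewrite (rprefix_inj xzn kn); case: (z k).
by move: zxn; rewrite (rprefix_inj zxk nk); case: (x n).
Qed.

Lemma prefixes_meet_branches (T : Type) (D : seq bool -> T -> Prop) x z n t :
  (forall s s' t, D s t -> D s' t -> s = s') ->
  rprefix x n = rprefix z n -> z n = ~~ x n ->
  (exists k, D (rprefix z k) t) /\ (exists k, D (~~ x k :: rprefix x k) t) <->
  D (z n :: rprefix z n) t.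
Proof.
move=> Ddisj xz zx; split=> [[[k Dk] [k' Dk']] | Dt].
  have /(rprefix_eq_branch xz zx) k'n := Ddisj _ _ _ Dk Dk'.
  by move: Dk'; rewrite k'n zx -xz.
by split; [exists n.+1 | exists n; rewrite -zx xz].
Qed.

Lemma cantor_diagonal (S : nat -> (nat -> bool) -> Prop) :
  (forall n x, S n x -> S n.+1 x) -> (forall x, exists n, S n x) ->
  forall m, exists n x z,
    [/\ m <= n, S n x, S n z, rprefix x n = rprefix z n & z n = ~~ x n].
Proof.
move=> Sincr Scover m.
pose bit n s := `[< exists z, [/\ S n z, rprefix z n = s & z n = false] >].
pose fix diag n := if n is k.+1 then bit k (diag k) :: diag k else [::].
(* [xd n] holds iff some [z] in [S n] agreeing with [xd] below [n] has [z n = false]. *)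
pose xd n := bit n (diag n).
have xd_diag n : rprefix xd n = diag n by elim: n => //= n ->.
have [n0 Sxd] := Scover xd; set n := maxn n0 m.
have {}Sxd : S n xd by exact: (@incr_leq _ S Sincr _ _ _ (leq_maxl _ _) Sxd).
have [xdn|/negbTE xdn] := boolP (xd n).
  have /asboolP [z [Sz zxd zn]] := xdn.
  exists n, xd, z; split=> //; first exact: leq_maxr.
    by rewrite xd_diag zxd.
  by rewrite zn xdn.
suff: xd n by rewrite xdn.
by apply/asboolP; exists xd; rewrite xd_diag.
Qed.

Section Bounded.
Variables (A : finType) (R : naRing A) (E : Type) (X : nat -> (E -> A) -> Prop).
Hypothesis Xincr : forall i f, X i f -> X i.+1 f.
Hypothesis XR : forall i f, Rclos R (X i) f -> X i.+1 f.
Hypothesis Xcover : forall f : E -> A, exists i, X i f.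

Lemma X_le i j f : i <= j -> X i f -> X j f.
Proof. exact: incr_leq. Qed.

Lemma X_add i x y : X i x -> X i y -> X i.+1 (pw_add R x y).
Proof. by move=> Xx Xy; apply: XR; do 4 right; left; exists x, y. Qed.

Lemma X_mul i x y : X i x -> X i y -> X i.+1 (pw_mul R x y).
Proof. by move=> Xx Xy; apply: XR; do 5 right; exists x, y. Qed.

Lemma X_zero : X 1 (@pw_const A E (na_zero R)).
Proof. by apply: XR; do 2 right; left. Qed.

Lemma X_uniform_finite (T : finType) (F : T -> E -> A) : exists i, forall t, X i (F t).
Proof.
suff [i Fi] : exists i, forall t, t \in enum T -> X i (F t).
  by exists i => t; apply: Fi; rewrite mem_enum.
elim: (enum T) => [|t s [i Fi]]; first by exists 0.
have [j Ftj] := Xcover (F t).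
exists (maxn i j) => u; rewrite in_cons => /orP[/eqP -> | us].
  exact: X_le (leq_maxr _ _) Ftj.
exact: X_le (leq_maxl _ _) (Fi _ us).
Qed.

Definition bounded (Z : E -> Prop) := exists i, forall f, supported R f Z -> X i f.

Lemma bounded_sub (Z W : E -> Prop) : (forall e, Z e -> W e) -> bounded W -> bounded Z.
Proof.
by move=> ZW [i Wi]; exists i => f fZ; apply: Wi => e nWe; apply: fZ => /ZW.
Qed.

Lemma bounded_set0 : bounded (fun _ => False).
Proof.
exists 1 => f f0; have -> : f = @pw_const A E (na_zero R) by apply: funext => e; apply: f0.
exact: X_zero.
Qed.

Lemma bounded_setU (Z W : E -> Prop) :
  bounded Z -> bounded W -> bounded (fun e => Z e \/ W e).
Proof.
move=> [i Zi] [j Wj]; exists (maxn i j).+1 => f fZW.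
pose fZ e := if `[< Z e >] then f e else na_zero R.
pose fW e := if `[< Z e >] then na_zero R else f e.
have -> : f = pw_add R fZ fW.
  by apply: funext => e; rewrite /pw_add /fZ /fW; case: asboolP; rewrite ?na_addr0 ?na_add0r.
apply: X_add.
  by apply: X_le (leq_maxl _ _) _; apply: Zi => e nZe; rewrite /fZ asboolF.
apply: X_le (leq_maxr _ _) _; apply: Wj => e nWe; rewrite /fW.
by case: asboolP => // nZe; apply: fZW => -[].
Qed.

Lemma bounded_fibres (Z : E -> Prop) (f : E -> A) :
  (forall a, bounded (fun e => Z e /\ f e = a)) -> bounded Z.
Proof.
move=> Zfib; apply: (@bounded_sub _ (fun e => Z e /\ f e \in enum A)).
  by move=> e Ze; rewrite mem_enum.
elim: (enum A) => [|a s IHs]; first by apply: bounded_sub bounded_set0 => e [].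
apply: bounded_sub (bounded_setU (Zfib a) IHs) => e [Ze].
by rewrite in_cons => /orP[/eqP|]; [left | right].
Qed.

Lemma unbounded_split (Z : E -> Prop) k : ~ bounded Z ->
  exists (D : E -> Prop) (h : E -> A), [/\ forall e, D e -> Z e, supported R h D,
    ~ X k h & ~ bounded (fun e => Z e /\ ~ D e)].
Proof.
move=> Zunb.
have [c Xc] := X_uniform_finite (@pw_const A E).
have [r Xr] := Xcover (indicator R Z).
pose m := k + c + r.
have [f [fZ fm]] : exists f, supported R f Z /\ ~ X m.+2 f.
  apply: contrapT => allX; apply: Zunb; exists m.+2 => f fZ.
  by apply: contrapT => fm; apply: allX; exists f.
have [a fibre_unb] : exists a, ~ bounded (fun e => Z e /\ f e = a).
  apply: contrapT => allb; apply/Zunb/(bounded_fibres (f := f)) => a.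
  by apply: contrapT => nb; apply: allb; exists a.
pose h e := if `[< Z e >] then na_add R (f e) (na_opp R a) else na_zero R.
exists (fun e => Z e /\ f e <> a), h; split.
- by move=> e [].
- move=> e; rewrite /h; case: asboolP => // Ze nDe.
  have -> : f e = a by apply: contrapT => fea; apply: nDe.
  exact: na_addrN.
- move=> Xh; apply: fm.
  have -> : f = pw_add R h (pw_mul R (@pw_const A E a) (indicator R Z)).
    apply: funext => e; rewrite /pw_add /pw_mul /pw_const /indicator /h.
    case: asboolP => Ze; last by rewrite na_mulr0 na_addr0 fZ.
    by rewrite na_mulr1 -na_addA na_addNr na_addr0.
  apply: X_add; first by apply: X_le Xh; lia.
  by apply: X_mul; [apply: X_le (Xc a) | apply: X_le Xr]; lia.
- move=> restb; apply: fibre_unb; apply: bounded_sub restb => e [Ze fea].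
  by split=> // -[].
Qed.

Lemma unbounded_disjoint_family (lvl : nat -> nat) : ~ bounded (fun _ => True) ->
  exists (D : nat -> E -> Prop) (h : nat -> E -> A),
  [/\ forall i j e, D i e -> D j e -> i = j, forall i, supported R (h i) (D i)
    & forall i, ~ X (lvl i) (h i)].
Proof.
move=> Tunb.
have /choice [pick Hpick] : forall p : (E -> Prop) * nat,
    exists q : (E -> Prop) * (E -> A), ~ bounded p.1 ->
    [/\ forall e, q.1 e -> p.1 e, supported R q.2 q.1, ~ X p.2 q.2
      & ~ bounded (fun e => p.1 e /\ ~ q.1 e)].
  move=> [Z k]; have [Zb|Zunb] := pselect (bounded Z).
    by exists (Z, fun _ => na_zero R) => /(_ Zb).
  by have [D [h Dh]] := unbounded_split k Zunb; exists (D, h).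
(* [rest n] is what remains of [E] once [D 0], ..., [D n.-1] are removed. *)
pose rest n := iteri n (fun i Z e => Z e /\ ~ (pick (Z, lvl i)).1 e) (fun _ => True).
have rest_unb n : ~ bounded (rest n) by elim: n => //= n IHn; case: (Hpick (rest n, lvl n)).
pose D n := (pick (rest n, lvl n)).1.
pose h n := (pick (rest n, lvl n)).2.
have Dh n := Hpick (rest n, lvl n) (rest_unb n).
have rest_decr m n e : m <= n -> rest n e -> rest m e.
  move=> /subnKC <-; elim: (n - m) => [|d IHd]; first by rewrite addn0.
  by rewrite addnS => -[/IHd].
have D_rest m n e : m < n -> D n e -> ~ D m e.
  move=> mn Dne; have [Drest _ _ _] := Dh n.
  by have [] := rest_decr _ _ _ mn (Drest _ Dne).
exists D, h; split=> [i j e Di Dj|i|i]; [|by case: (Dh i)..].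
by case: (ltngtP i j) => // ij; [case: (D_rest _ _ _ ij Dj) | case: (D_rest _ _ _ ij Di)].
Qed.

Lemma unbounded_disjoint_countable_family (I : countType) (lvl : I -> nat) :
  ~ bounded (fun _ => True) ->
  exists (D : I -> E -> Prop) (h : I -> E -> A),
  [/\ forall i j e, D i e -> D j e -> i = j, forall i, supported R (h i) (D i)
    & forall i, ~ X (lvl i) (h i)].
Proof.
move=> /(unbounded_disjoint_family (fun k => oapp lvl 0 (unpickle k))).
move=> [D [h [Ddisj hD hX]]].
exists (fun i => D (pickle i)), (fun i => h (pickle i)); split=> // [i j e Di Dj|i].
  exact: (pcan_inj (@pickleK I)) (Ddisj _ _ _ Di Dj).
by have := hX (pickle i); rewrite pickleK.
Qed.

End Bounded.

Theorem mainTheorem6 (A : finType) (R : naRing A) (E : Type)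
    (X : nat -> (E -> A) -> Prop)
    (Xincr : forall i f, X i f -> X i.+1 f)
    (XR : forall i f, Rclos R (X i) f -> X i.+1 f)
    (Xcover : forall f : E -> A, exists i, X i f) :
  exists i, forall f : E -> A, X i f.
Proof.
apply: contrapT => noLevel.
have Tunb : ~ bounded R X (fun _ => True).
  by case=> i Xi; apply: noLevel; exists i => f; apply: Xi => e /(_ I).
have [D [h [Ddisj hD hX]]] := unbounded_disjoint_countable_family Xincr XR Xcover
  (fun s : seq bool => (size s).+1) Tunb.
have [G DG] := glue_disjoint (na_zero R) h Ddisj.
pose B x e := exists k, D (rprefix x k) e.
pose C x e := exists k, D (~~ x k :: rprefix x k) e.
pose S n y := X n (indicator R (B y)) /\ X n (indicator R (C y)).
have Sincr n y : S n y -> S n.+1 y by case=> XB XC; split; apply: Xincr.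
have Scover y : exists n, S n y.
  have [n XBC] := X_uniform_finite Xincr Xcover
    (fun b : bool => indicator R (if b then B y else C y)).
  by exists n; split; [apply: (XBC true) | apply: (XBC false)].
have [m XG] := Xcover G.
have [n [x [z [mn [_ XCx] [XBz _] xz zx]]]] := cantor_diagonal Sincr Scover m.
apply: (hX (z n :: rprefix z n)).
have BC_D e := prefixes_meet_branches e Ddisj xz zx.
rewrite (mul_indicators_restrict BC_D (hD _) (DG _)) /= size_rprefix.
apply: (X_mul XR); last exact: Xincr.
by apply: (X_mul XR) XBz; apply: (X_le Xincr mn XG).
Qed.
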